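(* Let $0<\alpha<2$, $\alpha\neq 1$ or $\alpha=1$, let $\beta\in[-1,1]$, let $d\ge 1$ be an integer and $v\in\mathbb{R}$. Let $g_{\alpha,d}(v,\beta)$, $\beta_B$, $\theta_B$ and $h^{n}(\cdot\,;\alpha,\beta)$ be as defined in the context. Put $x=\left(\cos\left(\tfrac{\pi}{2}\alpha\theta_B\right)\right)^{1/\alpha}v$ (for $\alpha\neq1$) and $y=\tfrac{\pi}{2}v+\beta\log\tfrac{\pi}{2}$ (for $\alpha=1$). Then $$ g_{\alpha,d}(v,\beta)=\begin{cases} \mathrm{Re}\ \dfrac{\left(\cos\left(\frac{\pi}{2}\alpha\theta_B\right)\right)^{d/\alpha}}{2^d(\pi i)^{d-1}}\, h^{d-1}(|x|;\alpha,\beta_B^\ast), & \alpha\neq 1,\\[2mm] \mathrm{Re}\ \dfrac{\pi}{4^d i^{d-1}}\, h^{d-1}(y^\ast;1,|\beta|), & \alpha=1, \end{cases} $$ where $\beta_B^\ast=\beta_B\,\mathrm{sign}\,x$ and $y^\ast=y\,\mathrm{sign}\,\beta$, with the convention $\mathrm{sign}(w)=1$ for $w\ge 0$ and $\mathrm{sign}(w)=-1$ for $w<0$.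
   Context: For $0<\alpha<2$, $\beta\in[-1,1]$, integer $d\ge1$ and $v\in\mathbb{R}$ define $$ g_{\alpha,d}(v,\beta)=\begin{cases}\frac{1}{(2\pi)^d}\int_0^\infty \cos\left(vu-\left(\beta\tan\frac{\pi\alpha}{2}\right)u^\alpha\right)u^{d-1}e^{-u^\alpha}\,du, & \alpha\neq1,\\ \frac{1}{(2\pi)^d}\int_0^\infty\cos\left(vu+\frac{2}{\pi}\beta u\log u\right)u^{d-1}e^{-u}\,du, & \alpha=1.\end{cases} $$ Let $K(\alpha)=\alpha-1+\mathrm{sign}(1-\alpha)$ for $\alpha\ne1$. For $\alpha\neq1$ set $\beta_B=\frac{2}{\pi K(\alpha)}\arctan\left(\beta\tan\frac{\pi\alpha}{2}\right)$ and $\theta_B=\beta_BK(\alpha)/\alpha$. For a parameter $\beta\in[-1,1]$ and $\alpha\neq1$ put $\theta=\theta(\beta)=\beta K(\alpha)/\alpha$. For real $z>0$ define $$ \psi(z;\alpha,\beta)=\begin{cases}-z^\alpha\exp\left(-i\frac{\pi}{2}\theta\alpha\right),&\alpha\ne1,\\ -\frac{\pi}{2}z-i\beta z\log z,&\alpha=1,\end{cases} $$ (with $\theta=\beta K(\alpha)/\alpha$ computed from the third argument of $\psi$), and for integer $n\ge0$ and real $x$, $$ h^n(x;\alpha,\beta)=\frac{1}{\pi}\int_0^\infty (iz)^n\exp\left(izx+\psi(z;\alpha,-\beta)\right)dz . $$ *)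

From Stdlib Require Import Reals.
From Coquelicot Require Import Coquelicot.
Open Scope R_scope.

Definition cexp (z : C) : C := (RtoC (exp (Re z)) * (cos (Im z), sin (Im z)))%C.

Definition int0inf (f : R -> R) : R :=
  RInt_gen f (at_point 0) (Rbar_locally p_infty).
Definition cint0inf (f : R -> C) : C :=
  @RInt_gen C_R_CompleteNormedModule f (at_point 0) (Rbar_locally p_infty).

Definition sgn (w : R) : R := if Rlt_dec w 0 then -1 else 1.

Definition Kal (a : R) : R := a - 1 + sgn (1 - a).

Definition g_ad (a : R) (d : nat) (v b : R) : R :=
  if Req_EM_T a 1 then
    / (2 * PI) ^ d *
    int0inf (fun u => cos (v * u + 2 / PI * b * u * ln u) * u ^ (d - 1) * exp (- u))
  else
    / (2 * PI) ^ d *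
    int0inf (fun u => cos (v * u - (b * tan (PI * a / 2)) * Rpower u a)
                      * u ^ (d - 1) * exp (- Rpower u a)).

Definition beta_B (a b : R) : R := 2 / (PI * Kal a) * atan (b * tan (PI * a / 2)).
Definition theta_B (a b : R) : R := beta_B a b * Kal a / a.
Definition theta (a b : R) : R := b * Kal a / a.

Definition psi (z a b : R) : C :=
  if Req_EM_T a 1 then
    (RtoC (- (PI / 2) * z) - Ci * RtoC (b * z * ln z))%C
  else
    (- RtoC (Rpower z a) * cexp (- (Ci * RtoC (PI / 2 * theta a b * a))))%C.

Definition h (n : nat) (x a b : R) : C :=
  (RtoC (/ PI) * cint0inf (fun z => Cpow (Ci * RtoC z) n *
                                   cexp (Ci * RtoC (z * x) + psi z a (- b))))%C.

(* Both sides are integrals over (0, +oo) of damped oscillations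
   z^n exp (R1 z) (cos (I1 z), sin (I1 z)), n = d - 1, with R1 z <= - c z^alpha.
   In h the factor (i z)^n is i^n z^n, and the prefactor times i^n is real, so
   the real part of the complex integral is a real multiple of
   int z^n exp (R1 z) cos (I1 z) dz.  The substitution u = k z, with
   k = cos (pi alpha theta_B / 2)^(1/alpha) (resp. k = pi / 2 for alpha = 1),
   turns this integral into the one defining g: for alpha <> 1 the angle
   phi = pi alpha theta_B / 2 = atan (beta tan (pi alpha / 2)) satisfies
   sin phi = beta tan (pi alpha / 2) cos phi, and the signs sgn x, sgn beta only
   flip the argument of the cosine.  All integrals exist since the integrands
   are continuous on [0, +oo) and O(1/z^2) at infinity. *)

From Stdlib Require Import Reals Factorial Lra Lia.
From Coquelicot Require Import Coquelicot.
Open Scope R_scope.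

Notation is_int0inf f l := (is_RInt_gen f (at_point 0) (Rbar_locally p_infty) l).
Notation ex_int0inf f := (ex_RInt_gen f (at_point 0) (Rbar_locally p_infty)).

Lemma is_int0inf_ext_pos {V : NormedModule R_AbsRing} (f g : R -> V) (l : V) :
  (forall x, 0 < x -> f x = g x) -> is_int0inf f l -> is_int0inf g l.
Proof.
  intros Hfg. apply is_RInt_gen_ext.
  apply Filter_prod with (Q := fun a => a = 0) (R := fun b => 0 < b).
  - reflexivity.
  - exists 0. tauto.
  - intros x y Hx Hy t Ht. simpl in *. subst x. apply Hfg.
    rewrite Rmin_left in Ht by lra. lra.
Qed.

Lemma is_int0inf_of_lim {V : CompleteNormedModule R_AbsRing} (f : R -> V) (l : V) :
  (forall b, 0 <= b -> ex_RInt f 0 b) ->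
  filterlim (fun b => RInt f 0 b) (Rbar_locally p_infty) (locally l) ->
  is_int0inf f l.
Proof.
  intros Hex Hlim P HP. destruct (Hlim P HP) as [N HN].
  apply Filter_prod with (Q := fun a => a = 0) (R := fun b => Rmax 0 N < b).
  - reflexivity.
  - exists (Rmax 0 N). tauto.
  - intros x y -> Hy. pose proof (Rmax_l 0 N). pose proof (Rmax_r 0 N).
    exists (RInt f 0 y). split.
    + apply RInt_correct, Hex. lra.
    + apply HN. lra.
Qed.

Lemma is_int0inf_comp_div (f : R -> R) (l k : R) : 0 < k ->
  is_int0inf f l -> is_int0inf (fun u => f (u / k)) (k * l).
Proof.
  intros Hk H P [eps Heps].
  assert (Hek : 0 < eps / k) by (apply Rdiv_lt_0_compat; [apply cond_pos | exact Hk]).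
  assert (HP : locally l (fun y => P (k * y))).
  { exists (mkposreal _ Hek). intros y Hy. apply Heps.
    change (Rabs (k * y - k * l) < eps). change (Rabs (y - l) < eps / k) in Hy.
    replace (k * y - k * l) with (k * (y - l)) by ring.
    rewrite Rabs_mult, (Rabs_pos_eq k) by lra.
    apply (Rmult_lt_compat_l k) in Hy; [|exact Hk].
    replace (k * (eps / k)) with (pos eps) in Hy by (field; lra). exact Hy. }
  destruct (H _ HP) as [Q R HQ [M HM] HQR].
  apply Filter_prod with (Q := fun a => Q (a / k)) (R := fun b => R (b / k)).
  - unfold at_point in *. unfold Rdiv. rewrite Rmult_0_l. exact HQ.
  - exists (k * M). intros x Hx. apply HM.
    apply (Rmult_lt_reg_l k); [exact Hk|]. replace (k * (x / k)) with x by (field; lra). exact Hx.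
  - intros x y Hx Hy. destruct (HQR _ _ Hx Hy) as [z [Hz HPz]].
    exists (k * z). split; [|exact HPz].
    replace (x / k) with (/ k * x + 0) in Hz by (unfold Rdiv; ring).
    replace (y / k) with (/ k * y + 0) in Hz by (unfold Rdiv; ring).
    apply is_RInt_comp_lin, (is_RInt_scal _ _ _ k) in Hz.
    eapply is_RInt_ext; [|exact Hz].
    intros t _. unfold scal; simpl; unfold mult; simpl.
    replace (/ k * t + 0) with (t / k) by (unfold Rdiv; ring). field. lra.
Qed.

Lemma is_int0inf_lin_comb (f g : R -> R) (p q lf lg : R) :
  is_int0inf f lf -> is_int0inf g lg ->
  is_int0inf (fun z => p * f z + q * g z) (p * lf + q * lg).
Proof.
  intros Hf Hg.
  apply (is_RInt_gen_plus (V := R_NormedModule));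
    apply (is_RInt_gen_scal (V := R_NormedModule)); assumption.
Qed.

Lemma is_int0inf_C (f : R -> C) (lr li : R) :
  is_int0inf (fun t => Re (f t)) lr -> is_int0inf (fun t => Im (f t)) li ->
  @is_RInt_gen C_R_NormedModule f (at_point 0) (Rbar_locally p_infty) (lr, li).
Proof.
  intros Hr Hi P [eps Heps].
  assert (Fr := Hr _ (locally_ball lr eps)). assert (Fi := Hi _ (locally_ball li eps)).
  unfold filtermapi in *. generalize (filter_and _ _ Fr Fi).
  apply filter_imp. intros [x y] [[yr [H1 H2]] [yi [H3 H4]]].
  exists (yr, yi). split.
  - apply (is_RInt_fct_extend_pair (U := R_NormedModule) (V := R_NormedModule)); assumption.
  - apply Heps. split; assumption.
Qed.

Lemma int0inf_rescale (f g : R -> R) (E k : R) : 0 < k -> ex_int0inf f ->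
  (forall u, 0 < u -> g u = E * f (u / k)) -> int0inf g = E * k * int0inf f.
Proof.
  intros Hk [l Hl] Hg.
  assert (Hgl : is_int0inf g (E * (k * l))).
  { apply (is_int0inf_ext_pos (fun u => E * f (u / k))).
    - intros u Hu. symmetry. apply Hg, Hu.
    - apply (is_RInt_gen_scal (V := R_NormedModule) (fun u => f (u / k)) E (k * l)).
      apply is_int0inf_comp_div; assumption. }
  unfold int0inf. rewrite (is_RInt_gen_unique (V := R_CompleteNormedModule) _ _ Hgl).
  rewrite (is_RInt_gen_unique (V := R_CompleteNormedModule) _ _ Hl). ring.
Qed.

Lemma abs_RInt_le_inv_sqr (f : R -> R) (M u v : R) : 1 <= u <= v ->
  (forall z, u <= z <= v -> continuous f z) ->
  (forall z, 1 <= z -> Rabs (f z) <= M / z ^ 2) ->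
  Rabs (RInt f u v) <= M / u - M / v.
Proof.
  intros Huv Hc Hb.
  apply (norm_RInt_le f (fun z => M / z ^ 2) u v); try lra.
  - intros z Hz. apply Hb. lra.
  - apply (RInt_correct (V := R_CompleteNormedModule)), ex_RInt_continuous.
    intros z Hz. rewrite Rmin_left, Rmax_right in Hz by lra. apply Hc, Hz.
  - replace (M / u - M / v) with ((fun z => - (M / z)) v - (fun z => - (M / z)) u) by ring.
    apply (is_RInt_derive (fun z => - (M / z))); intros z Hz;
      rewrite Rmin_left, Rmax_right in Hz by lra.
    + auto_derive; [lra | field; lra].
    + apply (ex_derive_continuous (fun z => M / z ^ 2)). auto_derive.
      apply Rmult_integral_contrapositive; split; lra.
Qed.

Lemma ex_int0inf_inv_sqr_bound (f : R -> R) (M : R) :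
  (forall z, 0 <= z -> continuous f z) ->
  (forall z, 1 <= z -> Rabs (f z) <= M / z ^ 2) ->
  ex_int0inf f.
Proof.
  intros Hc Hb.
  assert (Hex : forall u v, 0 <= u <= v -> ex_RInt f u v).
  { intros u v Huv. apply (ex_RInt_continuous (V := R_CompleteNormedModule)).
    intros z Hz. rewrite Rmin_left in Hz by lra. apply Hc. lra. }
  assert (HM : 0 <= M).
  { specialize (Hb 1 (Rle_refl _)). pose proof (Rabs_pos (f 1)).
    replace (M / 1 ^ 2) with M in Hb by field. lra. }
  assert (Htail : forall u v, 1 <= u <= v -> Rabs (RInt f 0 v - RInt f 0 u) <= M / u).
  { intros u v Huv.
    rewrite <- (RInt_Chasles f 0 u v) by (apply Hex; lra).
    replace (plus (RInt f 0 u) (RInt f u v) - RInt f 0 u) with (RInt f u v)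
      by (unfold plus; simpl; lra).
    assert (0 <= M / v) by (apply Rdiv_le_0_compat; lra).
    pose proof (abs_RInt_le_inv_sqr f M u v Huv (fun z Hz => Hc z ltac:(lra)) Hb). lra. }
  destruct (proj1 (filterlim_locally_cauchy (F := Rbar_locally p_infty)
                     (fun b => RInt f 0 b))) as [l Hl].
  - intros eps. pose proof (cond_pos eps) as Heps.
    assert (HMe : 0 <= M / eps) by (apply Rdiv_le_0_compat; lra).
    assert (Hsmall : forall u, M / eps + 1 < u -> M / u < eps).
    { intros u Hu. apply Rmult_lt_reg_r with u; [lra|].
      replace (M / u * u) with M by (field; lra).
      replace M with (M / eps * eps) at 1 by (field; lra). nra. }
    exists (fun b => M / eps + 1 < b). split; [exists (M / eps + 1); tauto|].
    intros u v Hu Hv. change (Rabs (RInt f 0 v - RInt f 0 u) < eps).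
    destruct (Rle_dec u v).
    + apply Rle_lt_trans with (M / u); [apply Htail; lra | apply Hsmall, Hu].
    + rewrite Rabs_minus_sym.
      apply Rle_lt_trans with (M / v); [apply Htail; lra | apply Hsmall, Hv].
  - exists l. apply (is_int0inf_of_lim (V := R_CompleteNormedModule)); [|exact Hl].
    intros b Hb0. apply Hex. lra.
Qed.

Lemma pow_le_fact_mul_exp (x : R) (m : nat) : 0 <= x -> x ^ m <= INR (fact m) * exp x.
Proof.
  intros Hx.
  assert (Hterm : x ^ m / INR (fact m) <= exp x).
  { eapply Rle_trans; [|apply (exp_ge_taylor x m Hx)].
    destruct m as [|m]; [simpl; lra|].
    rewrite tech5.
    assert (0 <= sum_f_R0 (fun k => x ^ k / INR (fact k)) m); [|lra].
    apply cond_pos_sum. intros k.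
    apply Rdiv_le_0_compat; [apply pow_le, Hx | apply INR_fact_lt_0]. }
  pose proof (INR_fact_lt_0 m).
  apply Rmult_le_compat_l with (r := INR (fact m)) in Hterm; [|lra].
  replace (INR (fact m) * (x ^ m / INR (fact m))) with (x ^ m) in Hterm by (field; lra).
  exact Hterm.
Qed.

Lemma pow_mul_exp_Rpower_decay (n : nat) (c a : R) : 0 < c -> 0 < a ->
  exists M, forall z, 1 <= z -> z ^ n * exp (- (c * Rpower z a)) <= M / z ^ 2.
Proof.
  intros Hc Ha.
  destruct (nfloor_ex ((INR n + 2) / a)) as [N HN].
  { apply Rdiv_le_0_compat; [pose proof (pos_INR n) |]; lra. }
  set (m := S N).
  assert (Hm : INR n + 2 <= a * INR m).
  { unfold m. rewrite S_INR.
    apply Rmult_le_reg_r with (/ a); [apply Rinv_0_lt_compat, Ha|].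
    replace (a * (INR N + 1) * / a) with (INR N + 1) by (field; lra). unfold Rdiv in HN. lra. }
  exists (INR (fact m) / c ^ m). intros z Hz.
  assert (Hza : 0 < Rpower z a) by apply exp_pos.
  set (t := c * Rpower z a).
  assert (Ht : 0 < t) by (apply Rmult_lt_0_compat; lra).
  assert (Hzm : z ^ (n + 2) <= Rpower z a ^ m).
  { rewrite <- (Rpower_pow m), Rpower_mult, <- (Rpower_pow (n + 2) z) by lra.
    apply Rle_Rpower; [exact Hz|]. rewrite plus_INR. simpl (INR 2). lra. }
  assert (Htm : t ^ m <= INR (fact m) * exp t) by (apply pow_le_fact_mul_exp; lra).
  assert (Hcm : 0 < c ^ m) by (apply pow_lt, Hc).
  assert (Hz2 : 0 < z ^ 2) by (apply pow_lt; lra).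
  assert (He : 0 < exp t) by apply exp_pos.
  rewrite exp_Ropp.
  apply Rmult_le_reg_r with (c ^ m * exp t * z ^ 2).
  { apply Rmult_lt_0_compat; [apply Rmult_lt_0_compat |]; lra. }
  replace (z ^ n * / exp t * (c ^ m * exp t * z ^ 2)) with (c ^ m * z ^ (n + 2))
    by (rewrite pow_add; field; lra).
  replace (INR (fact m) / c ^ m / z ^ 2 * (c ^ m * exp t * z ^ 2)) with (INR (fact m) * exp t)
    by (field; lra).
  eapply Rle_trans; [|exact Htm].
  unfold t. rewrite Rpow_mult_distr. apply Rmult_le_compat_l; lra.
Qed.

Lemma ex_int0inf_stretched_exp_bound (f : R -> R) (n : nat) (c a : R) : 0 < c -> 0 < a ->
  (forall z, 0 <= z -> continuous f z) ->
  (forall z, 1 <= z -> Rabs (f z) <= z ^ n * exp (- (c * Rpower z a))) ->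
  ex_int0inf f.
Proof.
  intros Hc Ha Hcont Hb. destruct (pow_mul_exp_Rpower_decay n c a Hc Ha) as [M HM].
  apply (ex_int0inf_inv_sqr_bound f M Hcont).
  intros z Hz. eapply Rle_trans; [apply Hb, Hz | apply HM, Hz].
Qed.

Lemma continuous_R_plus (f g : R -> R) (x : R) :
  continuous f x -> continuous g x -> continuous (fun t => f t + g t) x.
Proof. apply (continuous_plus (V := R_NormedModule)). Qed.

Lemma continuous_R_mult (f g : R -> R) (x : R) :
  continuous f x -> continuous g x -> continuous (fun t => f t * g t) x.
Proof. apply (continuous_mult (K := R_AbsRing)). Qed.

Lemma continuous_R_comp_derivable (g f : R -> R) (x : R) :
  (forall y, ex_derive g y) -> continuous f x -> continuous (fun t => g (f t)) x.
Proof.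
  intros Hg Hf. apply (continuous_comp f g x Hf).
  apply (ex_derive_continuous (K := R_AbsRing) (V := R_NormedModule)), Hg.
Qed.

(* [Rpower z a] is [exp (a * ln z)], which is [1] at [z = 0]; this is its
   continuous modification, vanishing on [z <= 0]. *)
Definition Rpower0 (a z : R) : R := if Rlt_dec 0 z then Rpower z a else 0.

Lemma continuous_Rpower0 (a z : R) : 0 < a -> 0 <= z -> continuous (Rpower0 a) z.
Proof.
  intros Ha [Hz | <-].
  - apply continuous_ext_loc with (g := fun t => Rpower t a).
    + exists (mkposreal z Hz). intros y Hy. change (Rabs (y - z) < z) in Hy.
      apply Rabs_def2 in Hy. unfold Rpower0. destruct (Rlt_dec 0 y); [reflexivity | lra].
    + apply continuity_pt_filterlim, derivable_continuous_pt.
      exists (a * Rpower z (a - 1)). apply derivable_pt_lim_power, Hz.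
  - apply continuity_pt_filterlim. intros eps Heps.
    exists (Rpower eps (/ a)). split; [apply exp_pos|].
    intros y [_ Hy]. simpl in Hy |- *. unfold R_dist in Hy |- *.
    rewrite Rminus_0_r in Hy. unfold Rpower0.
    destruct (Rlt_dec 0 0) as [H0 | _]; [lra|]. rewrite Rminus_0_r.
    destruct (Rlt_dec 0 y) as [Hy0 | _]; [|rewrite Rabs_R0; exact Heps].
    rewrite Rabs_pos_eq in Hy by lra. rewrite Rabs_pos_eq by (left; apply exp_pos).
    replace eps with (Rpower (Rpower eps (/ a)) a)
      by (rewrite Rpower_mult, Rinv_l, Rpower_1; lra).
    apply Rlt_Rpower_l; lra.
Qed.

Lemma Rpower0_pos (a z : R) : 0 < z -> Rpower0 a z = Rpower z a.
Proof. intros Hz. unfold Rpower0. destruct (Rlt_dec 0 z); [reflexivity | lra]. Qed.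

Lemma continuous_lin_Rpower0 (p q a z : R) : 0 < a -> 0 <= z ->
  continuous (fun t => p * t + q * Rpower0 a t) z.
Proof.
  intros Ha Hz. apply continuous_R_plus.
  - apply (ex_derive_continuous (fun t => p * t)). auto_derive. exact I.
  - apply (continuous_R_comp_derivable (fun u => q * u)), continuous_Rpower0; try lra.
    intros u. auto_derive. exact I.
Qed.

Lemma ln_lt_self (w : R) : 0 < w -> ln w < w.
Proof.
  intros Hw. rewrite <- (ln_exp w) at 2. apply ln_increasing; [exact Hw|].
  pose proof (exp_ineq1_le w). pose proof (exp_pos w). lra.
Qed.

(* With [ln 0 = 0], [t * ln t] vanishes on [t <= 0]. *)
Lemma continuous_mul_ln (z : R) : 0 <= z -> continuous (fun t => t * ln t) z.
Proof.
  intros [Hz | <-].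
  - apply continuous_R_mult; [apply continuous_id|].
    apply (ex_derive_continuous (K := R_AbsRing) (V := R_NormedModule)).
    exists (/ z). apply is_derive_ln, Hz.
  - apply continuity_pt_filterlim. intros eps Heps.
    exists (Rmin 1 ((eps / 2) ^ 2)). split; [apply Rmin_pos; [lra | apply pow_lt; lra]|].
    intros y [_ Hy]. change (Rabs (y - 0) < Rmin 1 ((eps / 2) ^ 2)) in Hy.
    change (Rabs (y * ln y - 0 * ln 0) < eps).
    rewrite Rmult_0_l, !Rminus_0_r. rewrite Rminus_0_r in Hy.
    pose proof (Rmin_l 1 ((eps / 2) ^ 2)). pose proof (Rmin_r 1 ((eps / 2) ^ 2)).
    destruct (Rlt_dec 0 y) as [Hy0 | Hy0].
    2: { replace (ln y) with 0 by (unfold ln; destruct (Rlt_dec 0 y); easy).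
         rewrite Rmult_0_r, Rabs_R0. exact Heps. }
    rewrite Rabs_pos_eq in Hy by lra.
    assert (Hy1 : y < 1) by lra. assert (Hy2 : y < (eps / 2) ^ 2) by lra. clear Hy.
    (* [|y ln y| = 2 s^2 ln (1/s) < 2 s] for [s = sqrt y] *)
    set (s := sqrt y).
    assert (Hs : 0 < s) by (apply sqrt_lt_R0; lra).
    assert (Hss : s * s = y) by (apply sqrt_sqrt; lra).
    assert (Hse : s < eps / 2)
      by (apply Rsqr_incrst_0; unfold Rsqr; [rewrite Hss; simpl in Hy2 |..]; lra).
    assert (Hln : ln y = - 2 * ln (/ s)) by (rewrite ln_Rinv, <- Hss, ln_mult; lra).
    assert (Hl : 0 < ln (/ s)).
    { assert (Hs1 : s < 1) by nra.
      rewrite <- ln_1. apply ln_increasing; [lra|].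
      rewrite <- Rinv_1 at 1. apply Rinv_lt_contravar; lra. }
    assert (Hk : s * ln (/ s) < 1).
    { replace 1 with (s * / s) by (field; lra).
      apply Rmult_lt_compat_l, ln_lt_self, Rinv_0_lt_compat; exact Hs. }
    rewrite Hln, <- Hss, Rabs_left by nra. nra.
Qed.

Section Damped.

Variables (n : nat) (c a : R) (R1 I1 : R -> R).
Hypotheses (Hc : 0 < c) (Ha : 0 < a)
  (HR1 : forall z, 0 <= z -> continuous R1 z) (HI1 : forall z, 0 <= z -> continuous I1 z)
  (HR1_decay : forall z, 1 <= z -> R1 z <= - (c * Rpower z a)).

Definition damped (z : R) : C := (RtoC (z ^ n * exp (R1 z)) * (cos (I1 z), sin (I1 z)))%C.

Lemma ex_int0inf_damped_trig (trig : R -> R) :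
  (forall y, ex_derive trig y) -> (forall y, Rabs (trig y) <= 1) ->
  ex_int0inf (fun z => z ^ n * exp (R1 z) * trig (I1 z)).
Proof.
  intros Hd Hb. apply (ex_int0inf_stretched_exp_bound _ n c a Hc Ha).
  - intros z Hz. repeat apply continuous_R_mult.
    + apply (ex_derive_continuous (fun t => t ^ n)). auto_derive. exact I.
    + apply continuous_R_comp_derivable; [intros; auto_derive; exact I | apply HR1, Hz].
    + apply continuous_R_comp_derivable; [exact Hd | apply HI1, Hz].
  - intros z Hz.
    assert (Hzn : 0 < z ^ n) by (apply pow_lt; lra).
    pose proof (exp_pos (R1 z)). pose proof (Hb (I1 z)).
    rewrite !Rabs_mult, (Rabs_pos_eq (z ^ n)), (Rabs_pos_eq (exp _)) by lra.
    rewrite <- (Rmult_1_r (z ^ n * exp (- _))).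
    apply Rmult_le_compat; try apply Rabs_pos; [nra| |exact (Hb _)].
    apply Rmult_le_compat_l; [lra|].
    destruct (HR1_decay z Hz) as [Hlt | ->]; [left; apply exp_increasing, Hlt | lra].
Qed.

Lemma ex_int0inf_damped_cos : ex_int0inf (fun z => z ^ n * exp (R1 z) * cos (I1 z)).
Proof.
  apply ex_int0inf_damped_trig; intros y; [auto_derive; exact I | apply Rabs_le, COS_bound].
Qed.

Lemma ex_int0inf_damped_sin : ex_int0inf (fun z => z ^ n * exp (R1 z) * sin (I1 z)).
Proof.
  apply ex_int0inf_damped_trig; intros y; [auto_derive; exact I | apply Rabs_le, SIN_bound].
Qed.

Lemma Re_cint0inf_damped (K C0 : C) (r : R) (f : R -> C) :
  (C0 * K)%C = RtoC r -> (forall z, 0 < z -> f z = (K * damped z)%C) ->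
  Re (C0 * cint0inf f) = r * int0inf (fun z => z ^ n * exp (R1 z) * cos (I1 z)).
Proof.
  intros HCK Hf.
  set (Pc := fun z => z ^ n * exp (R1 z) * cos (I1 z)).
  set (Ps := fun z => z ^ n * exp (R1 z) * sin (I1 z)).
  assert (HPc : is_int0inf Pc (int0inf Pc))
    by apply (RInt_gen_correct (V := R_CompleteNormedModule)), ex_int0inf_damped_cos.
  assert (HPs : is_int0inf Ps (int0inf Ps))
    by apply (RInt_gen_correct (V := R_CompleteNormedModule)), ex_int0inf_damped_sin.
  set (Lc := int0inf Pc) in *. set (Ls := int0inf Ps) in *.
  assert (Hint : @is_RInt_gen C_R_NormedModule f (at_point 0) (Rbar_locally p_infty)
                   (K * (Lc, Ls))%C).
  { apply (is_int0inf_ext_pos (V := C_R_NormedModule) (fun z => (K * damped z)%C)).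
    { intros z Hz. symmetry. apply Hf, Hz. }
    replace (K * (Lc, Ls))%C with (Re K * Lc + - Im K * Ls, Im K * Lc + Re K * Ls)
      by (apply injective_projections; simpl; unfold Re, Im; ring).
    apply is_int0inf_C.
    - apply (is_int0inf_ext_pos (fun z => Re K * Pc z + - Im K * Ps z));
        [intros z _; unfold damped, Pc, Ps; simpl; unfold Re, Im; ring |].
      apply is_int0inf_lin_comb; assumption.
    - apply (is_int0inf_ext_pos (fun z => Im K * Pc z + Re K * Ps z));
        [intros z _; unfold damped, Pc, Ps; simpl; unfold Re, Im; ring |].
      apply is_int0inf_lin_comb; assumption. }
  unfold cint0inf. rewrite (is_RInt_gen_unique (V := C_R_CompleteNormedModule) _ _ Hint).
  rewrite Cmult_assoc, HCK. simpl. ring.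
Qed.

Lemma int0inf_rescaled_eq_Re_cint0inf (Q E k r : R) (K C0 : C) (f : R -> C) (g : R -> R) :
  0 < k -> (C0 * K)%C = RtoC r -> Q * E * k = r ->
  (forall z, 0 < z -> f z = (K * damped z)%C) ->
  (forall u, 0 < u -> g u = E * ((u / k) ^ n * exp (R1 (u / k)) * cos (I1 (u / k)))) ->
  Q * int0inf g = Re (C0 * cint0inf f).
Proof.
  intros Hk HCK HQ Hf Hg.
  rewrite (Re_cint0inf_damped K C0 r f HCK Hf).
  rewrite (int0inf_rescale _ g E k Hk ex_int0inf_damped_cos Hg), <- HQ. ring.
Qed.

End Damped.

Lemma Rabs_eq_sgn_mul (w : R) : Rabs w = sgn w * w.
Proof.
  unfold sgn. destruct (Rlt_dec w 0); [rewrite Rabs_left | rewrite Rabs_pos_eq]; lra.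
Qed.

Lemma cos_sgn_mul (w x : R) : cos (sgn w * x) = cos x.
Proof.
  unfold sgn. destruct (Rlt_dec w 0); [rewrite <- cos_neg | ]; f_equal; ring.
Qed.

Lemma sin_sgn_mul (w x : R) : sin (sgn w * x) = sgn w * sin x.
Proof.
  unfold sgn. destruct (Rlt_dec w 0).
  - replace (-1 * x) with (- x) by ring. rewrite sin_neg. ring.
  - rewrite !Rmult_1_l. reflexivity.
Qed.

Lemma cexp_polar (w : C) (r t : R) : Re w = r -> Im w = t ->
  cexp w = (RtoC (exp r) * (cos t, sin t))%C.
Proof. intros <- <-. reflexivity. Qed.

Lemma Cpow_Ci_mul_RtoC (z : R) (n : nat) : Cpow (Ci * RtoC z) n = (Cpow Ci n * RtoC (z ^ n))%C.
Proof. rewrite Cpow_mult_l, RtoC_pow. reflexivity. Qed.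

Lemma RtoC_neq_0 (x : R) : x <> 0 -> RtoC x <> 0%C.
Proof. intros Hx E. apply Hx. exact (f_equal Re E). Qed.

Lemma g_ad_1_eq (b v : R) (d : nat) : (1 <= d)%nat ->
  let y := PI / 2 * v + b * ln (PI / 2) in
  g_ad 1 d v b =
    Re (RtoC PI / (RtoC (4 ^ d) * Cpow Ci (d - 1)) * h (d - 1) (y * sgn b) 1 (Rabs b))%C.
Proof.
  intros Hd y. pose proof PI_RGT_0 as HPI.
  set (n := (d - 1)%nat). assert (Hdn : d = S n) by (unfold n; lia).
  set (k := PI / 2). assert (Hk : 0 < k) by (unfold k; lra).
  set (R1 := fun z => - (k * z)).
  set (I1 := fun z => z * (y * sgn b) + Rabs b * (z * ln z)).
  assert (HR1 : forall z, 0 <= z -> continuous R1 z).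
  { intros z _. apply (ex_derive_continuous R1). unfold R1. auto_derive. exact I. }
  assert (HI1 : forall z, 0 <= z -> continuous I1 z).
  { intros z Hz. apply continuous_R_plus.
    - apply (ex_derive_continuous (fun t => t * (y * sgn b))). auto_derive. exact I.
    - apply (continuous_R_comp_derivable (fun u => Rabs b * u)), continuous_mul_ln, Hz.
      intros u. auto_derive. exact I. }
  assert (Hdecay : forall z, 1 <= z -> R1 z <= - (k * Rpower z 1)).
  { intros z Hz. unfold R1. rewrite Rpower_1 by lra. lra. }
  unfold g_ad. destruct (Req_EM_T 1 1) as [_ | H1]; [|lra].
  unfold h. rewrite Cmult_assoc. change (d - 1)%nat with n.
  apply (int0inf_rescaled_eq_Re_cint0inf n k 1 R1 I1 Hk Rlt_0_1 HR1 HI1 Hdecay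
           _ (k ^ n) k (/ 4 ^ d) (Cpow Ci n)); [exact Hk | | | |].
  - rewrite (RtoC_inv (4 ^ d)), (RtoC_inv PI) by (apply pow_nonzero || idtac; lra).
    field. repeat split; try apply Cpow_nz, Ci_nz; apply RtoC_neq_0; try apply pow_nonzero; lra.
  - replace (/ (2 * PI) ^ d * k ^ n * k) with (/ (2 * PI) ^ d * k ^ d)
      by (rewrite Hdn; simpl; ring).
    rewrite <- !pow_inv, <- Rpow_mult_distr. f_equal. unfold k. field. lra.
  - intros z Hz. rewrite Cpow_Ci_mul_RtoC. unfold psi, damped.
    destruct (Req_EM_T 1 1) as [_ | H1]; [|lra].
    rewrite (cexp_polar _ (R1 z) (I1 z)); [rewrite RtoC_mult; ring | |];
      unfold R1, I1, k; simpl; ring.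
  - intros u Hu.
    assert (Harg : I1 (u / k) = sgn b * (v * u + 2 / PI * b * u * ln u)).
    { unfold I1, y. rewrite (ln_div u k), Rabs_eq_sgn_mul by lra. unfold k. field. lra. }
    unfold R1. rewrite Harg, cos_sgn_mul.
    replace (k * (u / k)) with u by (field; lra).
    unfold Rdiv. rewrite Rpow_mult_distr, pow_inv. field. apply pow_nonzero. lra.
Qed.

Lemma Kal_neq_0 (a : R) : 0 < a < 2 -> a <> 1 -> Kal a <> 0.
Proof. intros Ha Ha1. unfold Kal, sgn. destruct (Rlt_dec (1 - a) 0); lra. Qed.

Lemma cos_atan_pos (y : R) : 0 < cos (atan y).
Proof.
  rewrite cos_atan. apply Rdiv_lt_0_compat; [lra|].
  apply sqrt_lt_R0. pose proof (Rle_0_sqr y). lra.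
Qed.

Lemma sin_atan_eq (y : R) : sin (atan y) = y * cos (atan y).
Proof.
  rewrite sin_atan, cos_atan. field.
  apply Rgt_not_eq, sqrt_lt_R0. pose proof (Rle_0_sqr y). lra.
Qed.

Lemma theta_B_angle (a b : R) : 0 < a < 2 -> a <> 1 ->
  PI / 2 * a * theta_B a b = atan (b * tan (PI * a / 2)).
Proof.
  intros Ha Ha1. pose proof PI_RGT_0. pose proof (Kal_neq_0 a Ha Ha1).
  unfold theta_B, beta_B. field. lra.
Qed.

Lemma theta_opp_beta_B_angle (a b s : R) : 0 < a < 2 -> a <> 1 ->
  PI / 2 * theta a (- (beta_B a b * s)) * a = - (s * atan (b * tan (PI * a / 2))).
Proof.
  intros Ha Ha1. pose proof PI_RGT_0. pose proof (Kal_neq_0 a Ha Ha1).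
  unfold theta, beta_B. field. lra.
Qed.

Lemma Rpower_div_root (c a u : R) : 0 < c -> 0 < a -> 0 < u ->
  c * Rpower (u / Rpower c (/ a)) a = Rpower u a.
Proof.
  intros Hc Ha Hu. pose proof (exp_pos (/ a * ln c)) as Hk.
  replace c with (Rpower (Rpower c (/ a)) a) at 1
    by (rewrite Rpower_mult, Rinv_l, Rpower_1; lra).
  rewrite Rmult_comm, Rpower_mult_distr by (try apply Rdiv_lt_0_compat; assumption).
  f_equal. field. unfold Rpower. lra.
Qed.

Lemma h_integrand_neq_1 (a b x z : R) (n : nat) : 0 < a < 2 -> a <> 1 -> 0 < z ->
  let ph := atan (b * tan (PI * a / 2)) in
  (Cpow (Ci * RtoC z) n * cexp (Ci * RtoC (z * Rabs x) + psi z a (- (beta_B a b * sgn x))))%C =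
  (Cpow Ci n * damped n (fun t => - (cos ph * Rpower0 a t))%R
                        (fun t => t * Rabs x - sgn x * sin ph * Rpower0 a t)%R z)%C.
Proof.
  intros Ha Ha1 Hz ph. rewrite Cpow_Ci_mul_RtoC. unfold psi, damped.
  destruct (Req_EM_T a 1) as [H1 | _]; [lra|].
  rewrite (theta_opp_beta_B_angle a b (sgn x) Ha Ha1). fold ph.
  rewrite (cexp_polar (- (Ci * RtoC (- (sgn x * ph)))) 0 (sgn x * ph)) by (simpl; ring).
  rewrite exp_0, cos_sgn_mul, sin_sgn_mul, Rpower0_pos by exact Hz.
  rewrite (cexp_polar _ (- (cos ph * Rpower z a)) (z * Rabs x - sgn x * sin ph * Rpower z a))
    by (simpl; ring).
  rewrite RtoC_mult. ring.
Qed.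

Lemma g_integrand_neq_1 (a b v u : R) (n : nat) : 0 < a -> 0 < u ->
  let ph := atan (b * tan (PI * a / 2)) in
  let k := Rpower (cos ph) (/ a) in
  let x := k * v in
  cos (v * u - b * tan (PI * a / 2) * Rpower u a) * u ^ n * exp (- Rpower u a) =
  k ^ n * ((u / k) ^ n * exp (- (cos ph * Rpower0 a (u / k)))
           * cos (u / k * Rabs x - sgn x * sin ph * Rpower0 a (u / k))).
Proof.
  intros Ha Hu ph k x.
  assert (Hc : 0 < cos ph) by apply cos_atan_pos.
  assert (Hk : 0 < k) by apply exp_pos.
  assert (HPu : cos ph * Rpower0 a (u / k) = Rpower u a).
  { rewrite Rpower0_pos by (apply Rdiv_lt_0_compat; lra). apply Rpower_div_root; lra. }
  assert (Harg : u / k * Rabs x - sgn x * sin ph * Rpower0 a (u / k)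
                 = sgn x * (v * u - b * tan (PI * a / 2) * Rpower u a)).
  { assert (Hsin : sin ph = b * tan (PI * a / 2) * cos ph) by apply sin_atan_eq.
    rewrite Rabs_eq_sgn_mul, Hsin, <- HPu. unfold x. field. lra. }
  rewrite HPu, Harg, cos_sgn_mul.
  unfold Rdiv. rewrite Rpow_mult_distr, pow_inv. field. apply pow_nonzero. lra.
Qed.

Lemma g_ad_neq_1_eq (a b : R) (d : nat) (v : R) : 0 < a < 2 -> a <> 1 -> (1 <= d)%nat ->
  let x := Rpower (cos (PI / 2 * a * theta_B a b)) (/ a) * v in
  g_ad a d v b =
    Re (RtoC (Rpower (cos (PI / 2 * a * theta_B a b)) (INR d / a))
        / (RtoC (2 ^ d) * Cpow (RtoC PI * Ci) (d - 1))
        * h (d - 1) (Rabs x) a (beta_B a b * sgn x))%C.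
Proof.
  intros Ha Ha1 Hd x. pose proof PI_RGT_0 as HPI.
  set (n := (d - 1)%nat). assert (Hdn : d = S n) by (unfold n; lia).
  set (ph := atan (b * tan (PI * a / 2))).
  unfold x in *. clear x. rewrite (theta_B_angle a b Ha Ha1). fold ph.
  set (c := cos ph). assert (Hc : 0 < c) by apply cos_atan_pos.
  set (k := Rpower c (/ a)). assert (Hk : 0 < k) by apply exp_pos.
  set (x := k * v).
  set (R1 := fun z => - (c * Rpower0 a z)).
  set (I1 := fun z => z * Rabs x - sgn x * sin ph * Rpower0 a z).
  assert (HR1 : forall z, 0 <= z -> continuous R1 z).
  { intros z Hz. refine (continuous_ext (fun t => 0 * t + - c * Rpower0 a t) R1 z _ _).
    - intros t. unfold R1. simpl. ring.
    - apply continuous_lin_Rpower0; lra. }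
  assert (HI1 : forall z, 0 <= z -> continuous I1 z).
  { intros z Hz.
    refine (continuous_ext (fun t => Rabs x * t + - (sgn x * sin ph) * Rpower0 a t) I1 z _ _).
    - intros t. unfold I1. simpl. ring.
    - apply continuous_lin_Rpower0; lra. }
  assert (Hdecay : forall z, 1 <= z -> R1 z <= - (c * Rpower z a)).
  { intros z Hz. unfold R1. rewrite Rpower0_pos by lra. lra. }
  unfold g_ad. destruct (Req_EM_T a 1) as [H1 | _]; [lra|].
  unfold h. rewrite Cmult_assoc. change (d - 1)%nat with n.
  apply (int0inf_rescaled_eq_Re_cint0inf n c a R1 I1 Hc (proj1 Ha) HR1 HI1 Hdecay
           _ (k ^ n) k (Rpower c (INR d / a) / (2 ^ d * PI ^ n * PI)) (Cpow Ci n));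
    [exact Hk | | | |].
  - assert (Hden : 0 < 2 ^ d * PI ^ n * PI)
      by (apply Rmult_lt_0_compat; [apply Rmult_lt_0_compat; apply pow_lt |]; lra).
    rewrite Cpow_mult_l, <- RtoC_pow, RtoC_div, !RtoC_mult, RtoC_inv by lra.
    field. repeat split; try apply Cpow_nz, Ci_nz; apply RtoC_neq_0; try apply pow_nonzero; lra.
  - replace (Rpower c (INR d / a)) with (k ^ d)
      by (unfold k; rewrite <- Rpower_pow, Rpower_mult by apply exp_pos; f_equal; field; lra).
    rewrite Rpow_mult_distr, Hdn. simpl. field. repeat split; try apply pow_nonzero; lra.
  - intros z Hz. exact (h_integrand_neq_1 a b x z n Ha Ha1 Hz).
  - intros u Hu. exact (g_integrand_neq_1 a b v u n (proj1 Ha) Hu).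
Qed.

Theorem proposition1 (a b : R) (d : nat) (v : R) :
  0 < a < 2 -> -1 <= b <= 1 -> (1 <= d)%nat ->
  (a <> 1 ->
    let x := Rpower (cos (PI / 2 * a * theta_B a b)) (/ a) * v in
    g_ad a d v b =
      Re (RtoC (Rpower (cos (PI / 2 * a * theta_B a b)) (INR d / a))
          / (RtoC (2 ^ d) * Cpow (RtoC PI * Ci) (d - 1))
          * h (d - 1) (Rabs x) a (beta_B a b * sgn x))%C) /\
  (a = 1 ->
    let y := PI / 2 * v + b * ln (PI / 2) in
    g_ad a d v b =
      Re (RtoC PI / (RtoC (4 ^ d) * Cpow Ci (d - 1))
          * h (d - 1) (y * sgn b) 1 (Rabs b))%C).
Proof.
  intros Ha _ Hd. split.
  - intros Ha1. apply g_ad_neq_1_eq; assumption.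
  - intros ->. apply g_ad_1_eq, Hd.
Qed.
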